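(* Let $K$ be a Barański sponge in $\mathbb R^d$ and let $\mathbf w,\mathbf w'\in\mathcal D^*$ with $|\mathbf w|=|\mathbf w'|$ be such that $\pi(\mathbf w)-\pi(\mathbf w')$ is a nonzero $0$-$\pm1$ vector. Then $\psi_{\mathbf w}(K)\cap\psi_{\mathbf w'}(K)\ne\varnothing$ if and only if $\pi(\mathbf w)-\pi(\mathbf w')\in\mathcal E_{\,d-|\pi(\mathbf w)-\pi(\mathbf w')|}$.
   Context: Let $d\ge2$, integers $N_1,\dots,N_d\ge2$, probability vectors $(p_{i,1},\dots,p_{i,N_i})$ (positive entries summing to 1), $q_{i,1}=0$, $q_{i,j}=\sum_{\ell<j}p_{i,\ell}$. Let $\mathcal D\subset\{(j_1,\dots,j_d):1\le j_i\le N_i\}$ with $1<|\mathcal D|<\prod_iN_i$; for $w=(j_1,\dots,j_d)\in\mathcal D$, $\psi_w(x_1,\dots,x_d)=(p_{1,j_1}x_1+q_{1,j_1},\dots,p_{d,j_d}x_d+q_{d,j_d})$; $K$ is the unique nonempty compact set with $K=\bigcup_{w\in\mathcal D}\psi_w(K)$. $\mathcal D^*$ is the set of nonempty finite words over $\mathcal D$, $|\mathbf w|$ the length, and $\psi_{w_1\cdots w_k}=\psi_{w_1}\circ\cdots\circ\psi_{w_k}$. Define $\pi_i:\mathcal D^*\to\mathbb Z_{\ge0}$ by $\pi_i((j_1,\dots,j_d))=j_i$ and $\pi_i(\mathbf w w)=N_i\pi_i(\mathbf w)+\pi_i(w)$ for $\mathbf w\in\mathcal D^*,w\in\mathcal D$;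 $\pi(\mathbf w)=(\pi_1(\mathbf w),\dots,\pi_d(\mathbf w))$. A $0$-$\pm1$ vector is $\alpha\in\mathbb Z^d$ with all $|\alpha_i|\le1$, and $|\alpha|=\sum_i|\alpha_i|$. $\mathcal E_0$ is the set of nonzero $0$-$\pm1$ vectors $\alpha$ with $((N_1-1)\alpha_1,\dots,(N_d-1)\alpha_d)\in\mathcal D-\mathcal D$; for $1\le t\le d-1$, $\mathcal E_t$ is the set of nonzero $0$-$\pm1$ vectors $\alpha$ for which there is $e\in\mathcal D-\mathcal D$ with $(N_1\alpha_1,\dots,N_d\alpha_d)+e\in\bigcup_{k=0}^{t-1}\mathcal E_k$. Here $\mathcal D-\mathcal D=\{u-v:u,v\in\mathcal D\}$. *)

From HB Require Import structures.
From mathcomp Require Import all_boot all_order all_algebra.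
From mathcomp Require Import all_classical all_reals all_analysis.
Set Implicit Arguments. Unset Strict Implicit. Unset Printing Implicit Defensive.
Import Order.TTheory GRing.Theory Num.Theory.
Import numFieldNormedType.Exports.
Local Open Scope ring_scope.
Local Open Scope classical_set_scope.

(* A digit w = (j_1,...,j_d) is a finite function 'I_d -> nat (digits are 1-based). *)
Definition digit (d : nat) := {ffun 'I_d -> nat}.

Definition qpos (R : realType) (d : nat) (p : 'I_d -> nat -> R) (i : 'I_d) (j : nat) : R :=
  \sum_(1 <= l < j) p i l.

Definition psi1 (R : realType) (d : nat) (p : 'I_d -> nat -> R) (w : digit d)
  (x : 'rV[R]_d) : 'rV[R]_d :=
  \row_i (p i (w i) * x ord0 i + qpos p i (w i)).

Definition psiw (R : realType) (d : nat) (p : 'I_d -> nat -> R) (s : seq (digit d)) :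
  'rV[R]_d -> 'rV[R]_d :=
  foldr (fun w f => psi1 p w \o f) id s.

Definition piw (d : nat) (N : 'I_d -> nat) (s : seq (digit d)) (i : 'I_d) : int :=
  (foldl (fun acc (w : digit d) => N i * acc + w i)%N 0%N s)%:Z.

Definition zpm1 (d : nat) (a : 'I_d -> int) : Prop := forall i, `|a i| <= 1.
Definition nonzerov (d : nat) (a : 'I_d -> int) : Prop := exists i, a i != 0.
Definition absv (d : nat) (a : 'I_d -> int) : nat := (\sum_(i < d) absz (a i))%N.

Definition inDD (d : nat) (D : seq (digit d)) (e : 'I_d -> int) : Prop :=
  exists u v, u \in D /\ v \in D /\ forall i, e i = (u i)%:Z - (v i)%:Z.

Definition E0 (d : nat) (N : 'I_d -> nat) (D : seq (digit d)) (a : 'I_d -> int) : Prop :=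
  zpm1 a /\ nonzerov a /\ inDD D (fun i => ((N i)%:Z - 1) * a i).

(* next level, given the union U of the previous levels *)
Definition Estep (d : nat) (N : 'I_d -> nat) (D : seq (digit d))
  (U : ('I_d -> int) -> Prop) (a : 'I_d -> int) : Prop :=
  zpm1 a /\ nonzerov a /\
  exists e, inDD D e /\ U (fun i => (N i)%:Z * a i + e i).

Fixpoint Ecum (d : nat) (N : 'I_d -> nat) (D : seq (digit d)) (t : nat)
  : ('I_d -> int) -> Prop :=
  match t with
  | 0 => E0 N D
  | t'.+1 => fun a => Ecum N D t' a \/ Estep N D (Ecum N D t') a
  end.

Definition Eset (d : nat) (N : 'I_d -> nat) (D : seq (digit d)) (t : nat)
  : ('I_d -> int) -> Prop :=
  match t with
  | 0 => E0 N D
  | t'.+1 => Estep N D (Ecum N D t')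
  end.

(* K lies in [0,1]^d, and in coordinate i the map psi_s is an increasing affine
   bijection of [0,1] onto the cell numbered pi_i(s); cells of equal depth tile
   [0,1] in the order of their numbers, so psi_s(K) and psi_s'(K) meet iff K meets
   its translate K + a, with a = pi(s) - pi(s').  If y and y' = y + a lie in K,
   then y = psi_u(z) and y' = psi_v(z') with z' = z + (N a + u - v), again a 0-±1
   vector, equal to a on the support of a.  The support can grow at most d - |a|
   times; once the shift is stable, (N - 1) a = v - u, i.e. a lies in E_0.
   Conversely E_0 is realised by the fixed points of psi_u and psi_v, from which
   the recursion defining E_t climbs back up. *)

From HB Require Import structures.
From mathcomp Require Import all_boot all_order all_algebra.
From mathcomp Require Import all_classical all_reals all_analysis.
From mathcomp Require Import zify ring lra.
Import Order.TTheory GRing.Theory Num.Theory.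
Import numFieldNormedType.Exports.
Local Open Scope ring_scope.
Local Open Scope classical_set_scope.
Set Implicit Arguments. Unset Strict Implicit. Unset Printing Implicit Defensive.

Definition prefix_sum (R : realType) (P : nat -> R) (j : nat) : R :=
  \sum_(1 <= l < j) P l.

Definition cellmap (R : realType) (P : nat -> R) (j : nat) (z : R) : R :=
  P j * z + prefix_sum P j.

Lemma prefix_sum1 (R : realType) (P : nat -> R) : prefix_sum P 1 = 0.
Proof. by rewrite /prefix_sum big_geq. Qed.

Lemma prefix_sumS (R : realType) (P : nat -> R) j :
  (0 < j)%N -> prefix_sum P j.+1 = prefix_sum P j + P j.
Proof. by move=> j_gt0; rewrite /prefix_sum big_nat_recr. Qed.

Lemma cellmap1_0 (R : realType) (P : nat -> R) : cellmap P 1 0 = 0.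
Proof. by rewrite /cellmap mulr0 add0r prefix_sum1. Qed.

Lemma cellmapS_0 (R : realType) (P : nat -> R) j :
  (0 < j)%N -> cellmap P j.+1 0 = cellmap P j 1.
Proof. by move=> j_gt0; rewrite /cellmap mulr0 mulr1 add0r prefix_sumS // addrC. Qed.

Lemma diag_affine_fixpoint (R : realType) (d : nat) (a b : 'I_d -> R)
    (K : set 'rV[R]_d) :
  compact K -> K !=set0 -> (forall i, `|a i| < 1) ->
  (forall y, K y -> K (\row_i (a i * y ord0 i + b i))) ->
  exists2 y, K y & forall i, a i * y ord0 i + b i = y ord0 i.
Proof.
move=> K_compact K_nonempty a_lt1 K_stable.
(* A minimiser c of the defect h satisfies h c <= h (f c) = \sum_i |a i| e i,
   which forces every e i to vanish. *)
pose h (y : 'rV[R]_d) := \sum_(i < d) `|a i * y ord0 i + b i - y ord0 i|.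
have h_cont : continuous h.
  apply: continuous_big => [|i _]; first exact: add_continuous.
  move=> y; apply: (@continuous_comp _ _ _
    (fun y : 'rV[R]_d => a i * y ord0 i + b i - y ord0 i) Num.norm);
    last exact: norm_continuous.
  apply: continuousD; last by apply: continuousN; exact: coord_continuous.
  apply: continuousD; last exact: cst_continuous.
  by apply: continuousM; [exact: cst_continuous | exact: coord_continuous].
have [c /set_mem Kc c_min] :=
  EVT_min_rV K_nonempty K_compact (continuous_subspaceT h_cont).
pose e i := `|a i * c ord0 i + b i - c ord0 i|.
have h_image : h (\row_i (a i * c ord0 i + b i)) = \sum_(i < d) `|a i| * e i.
  apply: eq_bigr => i _; rewrite !mxE -normrM; congr `|_|; ring.
have e_ge0 i : 0 <= e i - `|a i| * e i.
  by rewrite subr_ge0 ler_piMl ?normr_ge0 // ltW.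
have sum_e : \sum_(i < d) (e i - `|a i| * e i) = 0.
  apply/eqP; rewrite eq_le sumr_ge0 ?andbT // sumrB subr_le0 -h_image.
  exact/c_min/mem_set/K_stable.
exists c => // i; apply/eqP; rewrite -subr_eq0 -normr_eq0 -/(e i).
have := a_lt1 i; have := (psumr_eq0P (fun i _ => e_ge0 i) sum_e) i isT.
have := normr_ge0 (a i); rewrite -/(e i); nra.
Qed.

Section Cells.
Variables (R : realType) (P : nat -> R) (M : nat).
Hypothesis M_gt1 : (1 < M)%N.
Hypothesis P_gt0 : forall j, (1 <= j <= M)%N -> 0 < P j.
Hypothesis P_sum1 : prefix_sum P M.+1 = 1.

Lemma prefix_sum_lt j k :
  (1 <= j)%N -> (j < k)%N -> (k <= M.+1)%N -> prefix_sum P j < prefix_sum P k.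
Proof.
move=> j_ge1; elim: k => [//|k IHk] jk kM.
have Pk : 0 < P k by apply: P_gt0; lia.
rewrite prefix_sumS; last by lia.
have [-> | jk'] := eqVneq j k; first by rewrite ltrDl.
by rewrite (lt_trans (IHk _ _)) ?ltrDl //; lia.
Qed.

Lemma prefix_sum_le j k :
  (1 <= j)%N -> (j <= k)%N -> (k <= M.+1)%N -> prefix_sum P j <= prefix_sum P k.
Proof.
move=> j_ge1 jk kM; have [-> // | jk'] := eqVneq j k.
by apply/ltW/prefix_sum_lt => //; lia.
Qed.

Lemma cellmapM_1 : cellmap P M 1 = 1.
Proof. by rewrite /cellmap mulr1 addrC -prefix_sumS ?P_sum1 //; lia. Qed.

Section Cell.
Variable j : nat.
Hypothesis j_range : (1 <= j <= M)%N.

Lemma cellmap_homo : {homo cellmap P j : x y / x < y}.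
Proof. by move=> x y xy; rewrite /cellmap ltrD2r ltr_pM2l // P_gt0. Qed.

Lemma cellmap_mono : {mono cellmap P j : x y / x <= y}.
Proof. exact/le_mono/cellmap_homo. Qed.

Lemma P_lt1 : P j < 1.
Proof.
rewrite -P_sum1; have [-> | j_ne1] := eqVneq j 1%N.
  by rewrite -[P 1]add0r -(prefix_sum1 P) -prefix_sumS // prefix_sum_lt //; lia.
apply: (@lt_le_trans _ _ (prefix_sum P j.+1)); last by apply: prefix_sum_le; lia.
rewrite prefix_sumS ?ltrDr; last by lia.
by rewrite -(prefix_sum1 P) prefix_sum_lt //; lia.
Qed.

Lemma cellmap_fixpoint_unique x y :
  cellmap P j x = x -> cellmap P j y = y -> x = y.
Proof.
by rewrite /cellmap => ex ey; have := P_lt1; nra.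
Qed.

End Cell.

Lemma prefix_sum_ge0 j : (1 <= j <= M.+1)%N -> 0 <= prefix_sum P j.
Proof. by move=> j_range; rewrite -(prefix_sum1 P) prefix_sum_le //; lia. Qed.

Lemma prefix_sum_le1 j : (1 <= j <= M.+1)%N -> prefix_sum P j <= 1.
Proof. by move=> j_range; rewrite -P_sum1 prefix_sum_le //; lia. Qed.

Lemma cellmap_bounds j (z : R) : (1 <= j <= M)%N -> 0 <= z <= 1 ->
  prefix_sum P j <= cellmap P j z <= prefix_sum P j.+1.
Proof.
move=> j_range z01; have Pj := P_gt0 j_range.
rewrite /cellmap prefix_sumS; last by lia.
by apply/andP; split; nra.
Qed.

Lemma cellmap_eq0 j (z : R) : (1 <= j <= M)%N -> 0 <= z <= 1 ->
  cellmap P j z = 0 <-> j = 1%N /\ z = 0.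
Proof.
move=> j_range z01; split => [|[-> ->]]; last exact: cellmap1_0.
have Pj := P_gt0 j_range.
have Qj : 0 <= prefix_sum P j by apply: prefix_sum_ge0; lia.
rewrite /cellmap => e; split; last by nra.
apply/eqP; apply: contraT => j_ne1.
have : prefix_sum P 1 < prefix_sum P j by apply: prefix_sum_lt; lia.
rewrite prefix_sum1; nra.
Qed.

Lemma cellmap_eq1 j (z : R) : (1 <= j <= M)%N -> 0 <= z <= 1 ->
  cellmap P j z = 1 <-> j = M /\ z = 1.
Proof.
move=> j_range z01; split => [e|[-> ->]]; last exact: cellmapM_1.
have Pj := P_gt0 j_range; have /andP[_ le_Q] := cellmap_bounds j_range z01.
have jM : j = M.
  apply/eqP; apply: contraT => j_neM.
  have : prefix_sum P j.+1 < 1 by rewrite -P_sum1 prefix_sum_lt //; lia.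
  lra.
split=> //; move: e; rewrite jM in Pj *; have := cellmapM_1.
rewrite /cellmap => e1 e; nra.
Qed.

Lemma cellmap_eq_lt a b (z z' : R) : (1 <= a)%N -> (a < b)%N -> (b <= M)%N ->
  0 <= z <= 1 -> 0 <= z' <= 1 ->
  cellmap P a z = cellmap P b z' <-> z' = z + a%:R - b%:R.
Proof.
move=> a_ge1 ab bM z01 z'01.
have ab_R : a%:R + 1 <= b%:R :> R by rewrite natr1 ler_nat.
suff -> : cellmap P a z = cellmap P b z' <-> [/\ b = a.+1, z = 1 & z' = 0].
  split=> [[-> -> ->]|e]; first by rewrite -natr1; lra.
  have [z1 z'0] : z = 1 /\ z' = 0 by lra.
  split=> //; apply/eqP; rewrite -(@eqr_nat R) -natr1; apply/eqP; lra.
split=> [e|[-> -> ->]]; last by rewrite cellmapS_0 //; lia.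
have Pa : 0 < P a by apply: P_gt0; lia.
have Pb : 0 < P b by apply: P_gt0; lia.
have /andP[_ aQ] := cellmap_bounds (j:=a) ltac:(lia) z01.
have /andP[Qb _] := cellmap_bounds (j:=b) ltac:(lia) z'01.
have Qab : prefix_sum P a.+1 <= prefix_sum P b by apply: prefix_sum_le; lia.
have ba : b = a.+1.
  apply/eqP; apply: contraT => b_neSa.
  have : prefix_sum P a.+1 < prefix_sum P b by apply: prefix_sum_lt; lia.
  lra.
move: aQ Qb e; rewrite ba /cellmap prefix_sumS; last by lia.
by rewrite ba in Pb; split=> //; nra.
Qed.

Lemma cellmap_unit j (z : R) : (1 <= j <= M)%N -> 0 <= z <= 1 ->
  0 <= cellmap P j z <= 1.
Proof.
move=> j_range z01; have /andP[Qj Qj1] := cellmap_bounds j_range z01.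
have : 0 <= prefix_sum P j by apply: prefix_sum_ge0; lia.
have : prefix_sum P j.+1 <= 1 by apply: prefix_sum_le1; lia.
by move=> *; apply/andP; split; lra.
Qed.

Lemma cellmap_eq a b (z z' : R) :
  (1 <= a <= M)%N -> (1 <= b <= M)%N -> 0 <= z <= 1 -> 0 <= z' <= 1 ->
  cellmap P a z = cellmap P b z' <-> z' = z + a%:R - b%:R.
Proof.
move=> a_range b_range z01 z'01.
case: (ltngtP a b) => [ab|ba|ab]; first by apply: cellmap_eq_lt => //; lia.
- have := @cellmap_eq_lt b a z' z ltac:(lia) ba ltac:(lia) z'01 z01.
  by case=> to from; split=> [/esym/to|e]; [lra | apply/esym/from; lra].
- by rewrite ab addrK; split=> [/(inc_inj (cellmap_mono b_range))|->].
Qed.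

Lemma cellmap_eq_add1 a b (z z' : R) :
  (1 <= a <= M)%N -> (1 <= b <= M)%N -> 0 <= z <= 1 -> 0 <= z' <= 1 ->
  cellmap P b z' = cellmap P a z + 1 <-> z' = z + M%:R + a%:R - b%:R.
Proof.
move=> a_range b_range z01 z'01.
have /andP[cz_ge0 _] := cellmap_unit a_range z01.
have /andP[_ cz'_le1] := cellmap_unit b_range z'01.
split=> [e|e].
  have [[-> ->] [-> ->]] : (a = 1%N /\ z = 0) /\ (b = M /\ z' = 1).
    by split; [apply/(cellmap_eq0 a_range z01) | apply/(cellmap_eq1 b_range z'01)]; lra.
  lra.
have a_ge1 : 1 <= a%:R :> R by rewrite ler1n; lia.
have bM : b%:R <= M%:R :> R by rewrite ler_nat; lia.
have [z0 z'1] : z = 0 /\ z' = 1 by split; lra.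
have -> : a = 1%N by apply/eqP; rewrite -(@pnatr_eq1 R); apply/eqP; lra.
have -> : b = M by apply/eqP; rewrite -(@eqr_nat R); apply/eqP; lra.
by rewrite z0 z'1 cellmap1_0 cellmapM_1 add0r.
Qed.

Lemma cellmap_shift a b (z z' : R) (al : int) :
  (1 <= a <= M)%N -> (1 <= b <= M)%N -> 0 <= z <= 1 -> 0 <= z' <= 1 ->
  `|al| <= 1 ->
  cellmap P b z' = cellmap P a z + al%:~R <->
  z' = z + (M%:Z * al + (a%:Z - b%:Z))%:~R.
Proof.
move=> a_range b_range z01 z'01 al_le1.
rewrite intrD intrM intrB -!pmulrn.
have [->|[->|->]] : al = -1 \/ al = 0 \/ al = 1 by lia.
- rewrite mulrN1z; case: (cellmap_eq_add1 b_range a_range z'01 z01) => to from.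
  by split=> e; [have := to ltac:(lra) | have := from ltac:(lra)]; lra.
- rewrite mulr0z; case: (cellmap_eq a_range b_range z01 z'01) => to from.
  by split=> e; [have := to ltac:(lra) | have := from ltac:(lra)]; lra.
- rewrite mulr1z; case: (cellmap_eq_add1 a_range b_range z01 z'01) => to from.
  by split=> e; [have := to ltac:(lra) | have := from ltac:(lra)]; lra.
Qed.

Lemma cellmap_fixpoint_shift a b (x x' : R) (al : int) :
  (1 <= a <= M)%N -> (1 <= b <= M)%N -> `|al| <= 1 ->
  (M%:Z - 1) * al = a%:Z - b%:Z ->
  cellmap P b x = x -> cellmap P a x' = x' -> x' = x + al%:~R.
Proof.
move=> a_range b_range al_le1.
have [->|[->|->]] : al = -1 \/ al = 0 \/ al = 1 by lia.
all: move=> e fix_x fix_x'.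
- have [a1 bM] : a = 1%N /\ b = M by lia.
  rewrite a1 in fix_x'; rewrite bM in fix_x.
  rewrite mulrN1z (cellmap_fixpoint_unique _ fix_x' (cellmap1_0 P)); last by lia.
  by rewrite (cellmap_fixpoint_unique _ fix_x cellmapM_1) ?subrr //; lia.
- have ab : a = b by lia.
  by rewrite mulr0z addr0; apply: (cellmap_fixpoint_unique b_range) => //; rewrite -ab.
- have [aM b1] : a = M /\ b = 1%N by lia.
  rewrite aM in fix_x'; rewrite b1 in fix_x.
  rewrite mulr1z (cellmap_fixpoint_unique _ fix_x' cellmapM_1); last by lia.
  by rewrite (cellmap_fixpoint_unique _ fix_x (cellmap1_0 P)) ?add0r //; lia.
Qed.

Lemma le_cellmap_le1 j (x : R) : (1 <= j <= M)%N -> x <= cellmap P j x -> x <= 1.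
Proof.
move=> j_range; have Pj := P_gt0 j_range; have := P_lt1 j_range.
have : prefix_sum P j.+1 <= 1 by apply: prefix_sum_le1; lia.
rewrite /cellmap prefix_sumS; last by lia.
by move=> *; nra.
Qed.

Lemma cellmap_le_ge0 j (x : R) : (1 <= j <= M)%N -> cellmap P j x <= x -> 0 <= x.
Proof.
move=> j_range; have Pj := P_gt0 j_range; have := P_lt1 j_range.
have : 0 <= prefix_sum P j by apply: prefix_sum_ge0; lia.
by rewrite /cellmap => *; nra.
Qed.

End Cells.

Lemma homo_pinch (R : realType) (f g : R -> R) (x x' : R) :
  {homo f : t t' / t < t'} -> {homo g : t t' / t < t'} ->
  f 0 = g 1 -> 0 <= x <= 1 -> 0 <= x' <= 1 -> f x = g x' -> x = 0 /\ x' = 1.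
Proof.
move=> /le_mono f_mono /le_mono g_mono fg01 /andP[x_ge0 _] /andP[_ x'_le1] fgx.
have f0x : f 0 <= f x by rewrite f_mono.
have gx'1 : g x' <= g 1 by rewrite g_mono.
by split; [apply: (inc_inj f_mono) | apply: (inc_inj g_mono)]; apply/eqP;
  rewrite eq_le ?f0x ?gx'1 ?andbT; rewrite ?fgx ?fg01 // -fgx -fg01.
Qed.

Definition coordw (R : realType) (d : nat) (p : 'I_d -> nat -> R)
    (s : seq (digit d)) (i : 'I_d) : R -> R :=
  foldr (fun (w : digit d) f t => cellmap (p i) (w i) (f t)) id s.

Definition radixw (d : nat) (N : 'I_d -> nat) (s : seq (digit d)) (i : 'I_d) : nat :=
  foldl (fun acc (w : digit d) => N i * acc + w i)%N 0%N s.

Definition in_digit_range (d : nat) (N : 'I_d -> nat) (s : seq (digit d)) : Prop :=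
  forall w, w \in s -> forall i, (1 <= w i <= N i)%N.

Lemma psi1_coord (R : realType) (d : nat) (p : 'I_d -> nat -> R) w x i :
  psi1 p w x ord0 i = cellmap (p i) (w i) (x ord0 i).
Proof. by rewrite mxE. Qed.

Lemma psiw_coord (R : realType) (d : nat) (p : 'I_d -> nat -> R) s x i :
  psiw p s x ord0 i = coordw p s i (x ord0 i).
Proof. by elim: s => [|w s IHs] //=; rewrite psi1_coord IHs. Qed.

Lemma coordw_rcons (R : realType) (d : nat) (p : 'I_d -> nat -> R) s w i t :
  coordw p (rcons s w) i t = coordw p s i (cellmap (p i) (w i) t).
Proof. by elim: s => [|v s IHs] //=; rewrite IHs. Qed.

Lemma radixw_rcons (d : nat) (N : 'I_d -> nat) s w i :
  radixw N (rcons s w) i = (N i * radixw N s i + w i)%N.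
Proof. by rewrite /radixw foldl_rcons. Qed.

Lemma in_digit_range_rcons (d : nat) (N : 'I_d -> nat) s w :
  in_digit_range N (rcons s w) <->
  in_digit_range N s /\ forall i, (1 <= w i <= N i)%N.
Proof.
split=> [s_range|[s_range w_range] v]; last first.
  by rewrite mem_rcons inE => /orP[/eqP ->|/s_range].
by split=> [v vs|]; apply: s_range; rewrite mem_rcons inE ?vs ?orbT ?eqxx.
Qed.

Lemma radix_digit_inj (M m n w w' : nat) : (1 <= w <= M)%N -> (1 <= w' <= M)%N ->
  (M * m + w = M * n + w')%N -> m = n /\ w = w'.
Proof.
move=> w_range w'_range; case: (ltngtP m n) => [mn|nm|->] e; last by split=> //; lia.
- have : (M * m.+1 <= M * n)%N by rewrite leq_mul2l mn orbT. lia.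
- have : (M * n.+1 <= M * m)%N by rewrite leq_mul2l nm orbT. lia.
Qed.

Lemma radix_digit_succ (M m n w w' : nat) : (1 <= w <= M)%N -> (1 <= w' <= M)%N ->
  (M * m + w = (M * n + w').+1)%N ->
  (m = n /\ w = w'.+1) \/ (m = n.+1 /\ w = 1 /\ w' = M)%N.
Proof.
move=> w_range w'_range; case: (ltngtP m n) => [mn|nm|->] e; last by left; lia.
- have : (M * m.+1 <= M * n)%N by rewrite leq_mul2l mn orbT. lia.
- have [m_Sn|m_neSn] := eqVneq m n.+1; first by right; rewrite m_Sn mulnS in e; lia.
  have : (M * n.+2 <= M * m)%N by rewrite leq_mul2l orbC ltn_neqAle eq_sym m_neSn nm.
  lia.
Qed.

Section Words.
Variables (R : realType) (d : nat) (N : 'I_d -> nat) (p : 'I_d -> nat -> R).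
Hypothesis N_ge2 : forall i, (2 <= N i)%N.
Hypothesis p_gt0 : forall i j, (1 <= j <= N i)%N -> 0 < p i j.
Hypothesis p_sum1 : forall i, \sum_(1 <= j < (N i).+1) p i j = 1.

Lemma coordw_homo s i : in_digit_range N s -> {homo coordw p s i : x y / x < y}.
Proof.
elim: s => [|w s IHs] s_range x y xy //=.
apply: (cellmap_homo (p_gt0 (i:=i))); first by apply: s_range; rewrite mem_head.
by apply: IHs => // v vs; apply: s_range; rewrite inE vs orbT.
Qed.

Lemma coordw_eq s s' i : size s = size s' ->
  in_digit_range N s -> in_digit_range N s' ->
  radixw N s i = radixw N s' i -> coordw p s i =1 coordw p s' i.
Proof.
elim/last_ind: s s' => [|s w IHs] s'; first by case: s'.
case/lastP: s' => [|s' w']; first by rewrite size_rcons.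
rewrite !size_rcons => -[size_eq] /in_digit_range_rcons[s_range w_range]
  /in_digit_range_rcons[s'_range w'_range].
rewrite !radixw_rcons => /(radix_digit_inj (w_range i) (w'_range i))[radix_eq w_eq] t.
by rewrite !coordw_rcons w_eq; apply: IHs.
Qed.

Lemma coordw_succ s s' i : size s = size s' ->
  in_digit_range N s -> in_digit_range N s' ->
  radixw N s i = (radixw N s' i).+1 -> coordw p s i 0 = coordw p s' i 1.
Proof.
elim/last_ind: s s' => [|s w IHs] s'; first by case: s'.
case/lastP: s' => [|s' w']; first by rewrite size_rcons.
rewrite !size_rcons => -[size_eq] /in_digit_range_rcons[s_range w_range]
  /in_digit_range_rcons[s'_range w'_range].
rewrite !radixw_rcons !coordw_rcons.
case/(radix_digit_succ (w_range i) (w'_range i)) => [[radix_eq ->]|[radix_eq [-> ->]]].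
  by rewrite cellmapS_0; [apply: coordw_eq | case/andP: (w'_range i)].
by rewrite cellmap1_0 (cellmapM_1 (N_ge2 i) (p_sum1 i)); apply: IHs.
Qed.

Lemma coordw_meet s s' i (x x' : R) : size s = size s' ->
  in_digit_range N s -> in_digit_range N s' -> 0 <= x <= 1 -> 0 <= x' <= 1 ->
  `|(radixw N s i)%:Z - (radixw N s' i)%:Z| <= 1 ->
  coordw p s i x = coordw p s' i x' <->
  x' = x + ((radixw N s i)%:Z - (radixw N s' i)%:Z)%:~R.
Proof.
move=> size_eq s_range s'_range x01 x'01 radix_near.
have homo := @coordw_homo s i s_range; have homo' := @coordw_homo s' i s'_range.
have [e|[e|e]] : radixw N s' i = (radixw N s i).+1 \/
  radixw N s i = radixw N s' i \/ radixw N s i = (radixw N s' i).+1 by lia.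
- have e01 := coordw_succ (esym size_eq) s'_range s_range e.
  have -> : (radixw N s i)%:Z - (radixw N s' i)%:Z = -1 by lia.
  rewrite mulrN1z; split=> [/esym/(homo_pinch homo' homo e01 x'01 x01)[-> ->]|ex].
    by rewrite subrr.
  by have [-> ->] : x = 1 /\ x' = 0 by split; lra.
- rewrite (coordw_eq size_eq s_range s'_range e) e subrr mulr0z addr0.
  by split=> [/(inc_inj (le_mono homo'))|->].
- have e01 := coordw_succ size_eq s_range s'_range e.
  have -> : (radixw N s i)%:Z - (radixw N s' i)%:Z = 1 by lia.
  rewrite mulr1z; split=> [/(homo_pinch homo homo' e01 x01 x'01)[-> ->]|ex].
    by rewrite add0r.
  by have [-> ->] : x = 0 /\ x' = 1 by split; lra.
Qed.

End Words.

Lemma unit_interval_shift_le1 (R : realType) (x x' : R) (k : int) :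
  0 <= x <= 1 -> 0 <= x' <= 1 -> x' = x + k%:~R -> `|k| <= 1.
Proof.
move=> x01 x'01 e.
have : (-1)%:~R <= k%:~R :> R by rewrite mulrN1z; lra.
have : k%:~R <= 1%:~R :> R by rewrite mulr1z; lra.
by rewrite !ler_int; lia.
Qed.

Definition translate_meets (R : realType) (d : nat) (K : set 'rV[R]_d)
    (al : 'I_d -> int) : Prop :=
  exists y y', [/\ K y, K y' & forall i, y' ord0 i = y ord0 i + (al i)%:~R].

Definition zoom_shift (d : nat) (N : 'I_d -> nat) (u v : digit d)
    (al : 'I_d -> int) : 'I_d -> int :=
  fun i => (N i)%:Z * al i + ((u i)%:Z - (v i)%:Z).

Section Levels.
Variables (d : nat) (N : 'I_d -> nat) (D : seq (digit d)).

Lemma Ecum_zpm1 k al : Ecum N D k al -> zpm1 al.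
Proof. by elim: k al => [|k IHk] al /= => [[]|[/IHk|[]]]. Qed.

Lemma Eset_Ecum k al : Eset N D k al -> Ecum N D k al.
Proof. by case: k => [|k] //= Ek; right. Qed.

Lemma Ecum_mono k k' al : (k <= k')%N -> Ecum N D k al -> Ecum N D k' al.
Proof.
elim: k' => [|k' IHk']; first by rewrite leqn0 => /eqP ->.
by rewrite leq_eqVlt => /orP[/eqP -> //|] /IHk' Ek' /Ek'; left.
Qed.

Lemma E0_Eset k al : E0 N D al -> Eset N D k al.
Proof.
case: k => [//|k] al_E0; have [al_zpm1 [al_nz [u [v [uD [vD uv_eq]]]]]] := al_E0.
split=> //; split=> //; exists (fun i => (v i)%:Z - (u i)%:Z).
split; first by exists v, u.
have -> : (fun i => (N i)%:Z * al i + ((v i)%:Z - (u i)%:Z)) = al.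
  by apply: funext => i; have := uv_eq i; rewrite mulrBl mul1r; lia.
exact: (@Ecum_mono 0 k _ (leq0n k) al_E0).
Qed.

Lemma absv_le_dim (al : 'I_d -> int) : zpm1 al -> (absv al <= d)%N.
Proof.
move=> al_zpm1; rewrite /absv -[leqRHS]card_ord -sum1_card.
by apply: leq_sum => i _; have := al_zpm1 i; lia.
Qed.

Lemma absv_lt (al be : 'I_d -> int) i :
  (forall j, absz (al j) <= absz (be j))%N -> (absz (al i) < absz (be i))%N ->
  (absv al < absv be)%N.
Proof.
move=> le_al_be lt_i; rewrite /absv (bigD1 i) // [X in (_ < X)%N](bigD1 i) //=.
by rewrite -addSn leq_add // leq_sum.
Qed.

Lemma zoom_shift_id (u v : digit d) (al : 'I_d -> int) i :
  (1 <= u i <= N i)%N -> (1 <= v i <= N i)%N ->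
  `|al i| <= 1 -> `|zoom_shift N u v al i| <= 1 -> al i != 0 ->
  zoom_shift N u v al i = al i.
Proof.
rewrite /zoom_shift => u_range v_range al_le1.
have [->|[->|->]] : al i = -1 \/ al i = 0 \/ al i = 1 by lia.
all: lia.
Qed.

End Levels.

Section Sponge.
Variables (R : realType) (d : nat) (N : 'I_d -> nat) (p : 'I_d -> nat -> R).
Variables (D : seq (digit d)) (K : set 'rV[R]_d).
Hypothesis N_ge2 : forall i, (2 <= N i)%N.
Hypothesis p_gt0 : forall i j, (1 <= j <= N i)%N -> 0 < p i j.
Hypothesis p_sum1 : forall i, \sum_(1 <= j < (N i).+1) p i j = 1.
Hypothesis D_range : in_digit_range N D.
Hypothesis K_compact : compact K.
Hypothesis K_nonempty : K !=set0.
Hypothesis K_attractor : K = \bigcup_(w in [set w | w \in D]) (psi1 p w @` K).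

Lemma K_image w z : w \in D -> K z -> K (psi1 p w z).
Proof. by move=> wD Kz; rewrite K_attractor; exists w => //; exists z. Qed.

Lemma K_preimage y : K y -> exists w z, [/\ w \in D, K z & y = psi1 p w z].
Proof. by rewrite {1}K_attractor => -[w /= wD [z Kz <-]]; exists w, z. Qed.

Lemma K_unit_cube y i : K y -> 0 <= y ord0 i <= 1.
Proof.
move=> Ky; have coord_cont : {within K, continuous (fun y : 'rV[R]_d => y ord0 i)}.
  by apply: continuous_subspaceT; exact: coord_continuous.
have [c /set_mem Kc c_max] := EVT_max_rV K_nonempty K_compact coord_cont.
have [c' /set_mem Kc' c'_min] := EVT_min_rV K_nonempty K_compact coord_cont.
have c_le1 : c ord0 i <= 1.
  have [w [z [wD Kz c_eq]]] := K_preimage Kc; have w_range := D_range wD i.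
  apply: (le_cellmap_le1 (N_ge2 i) (p_gt0 (i:=i)) (p_sum1 i) w_range).
  by rewrite {1}c_eq psi1_coord (cellmap_mono (p_gt0 (i:=i))) //; exact/c_max/mem_set.
have c'_ge0 : 0 <= c' ord0 i.
  have [w [z [wD Kz c_eq]]] := K_preimage Kc'; have w_range := D_range wD i.
  apply: (cellmap_le_ge0 (N_ge2 i) (p_gt0 (i:=i)) (p_sum1 i) w_range).
  by rewrite {2}c_eq psi1_coord (cellmap_mono (p_gt0 (i:=i))) //; exact/c'_min/mem_set.
have := c_max _ (mem_set Ky); have := c'_min _ (mem_set Ky).
by move=> *; apply/andP; split; lra.
Qed.

Lemma psi1_fixpoint u : u \in D ->
  exists2 y, K y & forall i, cellmap (p i) (u i) (y ord0 i) = y ord0 i.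
Proof.
move=> uD; apply: diag_affine_fixpoint => // [i|y Ky]; last exact: K_image.
have u_range := D_range uD i; have := P_lt1 (N_ge2 i) (p_gt0 (i:=i)) (p_sum1 i) u_range.
by rewrite ger0_norm // ltW // p_gt0.
Qed.

Lemma translate_meets_zoom al : zpm1 al ->
  translate_meets K al <-> exists u v, [/\ u \in D, v \in D,
    zpm1 (zoom_shift N u v al) & translate_meets K (zoom_shift N u v al)].
Proof.
move=> al_zpm1.
split=> [[y [y' [Ky Ky' y'_eq]]]|[u [v [uD vD _ [z [z' [Kz Kz' z'_eq]]]]]]].
  have [u [z [uD Kz y_eq]]] := K_preimage Ky.
  have [v [z' [vD Kz' y'_eq']]] := K_preimage Ky'.
  have z'_eq i : z' ord0 i = z ord0 i + (zoom_shift N u v al i)%:~R.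
    rewrite /zoom_shift; apply/(cellmap_shift (N_ge2 i) (p_gt0 (i:=i)) (p_sum1 i)
      (D_range uD i) (D_range vD i) (K_unit_cube i Kz) (K_unit_cube i Kz') (al_zpm1 i)).
    by rewrite -!psi1_coord -y_eq -y'_eq'.
  exists u, v; split=> //; last by exists z, z'.
  by move=> i; apply: (unit_interval_shift_le1 (K_unit_cube i Kz) (K_unit_cube i Kz')).
exists (psi1 p u z), (psi1 p v z'); split; [exact: K_image | exact: K_image |] => i.
rewrite !psi1_coord; apply/(cellmap_shift (N_ge2 i) (p_gt0 (i:=i)) (p_sum1 i)
  (D_range uD i) (D_range vD i) (K_unit_cube i Kz) (K_unit_cube i Kz') (al_zpm1 i)).
exact: z'_eq.
Qed.

Lemma E0_translate_meets al : E0 N D al -> translate_meets K al.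
Proof.
move=> [al_zpm1 [_ [u [v [uD [vD uv_eq]]]]]].
have [y' Ky' fix_y'] := psi1_fixpoint uD; have [y Ky fix_y] := psi1_fixpoint vD.
exists y, y'; split=> // i.
apply: (cellmap_fixpoint_shift (N_ge2 i) (p_gt0 (i:=i)) (p_sum1 i) (D_range uD i)
  (D_range vD i) (al_zpm1 i) _ (fix_y i) (fix_y' i)).
by rewrite uv_eq.
Qed.

Lemma Ecum_translate_meets k al : Ecum N D k al -> translate_meets K al.
Proof.
elim: k al => [|k IHk] al /=; first exact: E0_translate_meets.
case=> [/IHk //|[al_zpm1 [_ [e [[u [v [uD [vD e_eq]]]] Ee]]]]].
apply/(translate_meets_zoom al_zpm1); exists u, v.
have -> : zoom_shift N u v al = (fun i => (N i)%:Z * al i + e i).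
  by apply: funext => i; rewrite /zoom_shift e_eq.
by split=> //; [exact: Ecum_zpm1 Ee | exact: IHk].
Qed.

Lemma translate_meets_Eset al : zpm1 al -> nonzerov al ->
  translate_meets K al -> Eset N D (d - absv al) al.
Proof.
move m_eq : (d - absv al)%N => m; elim/ltn_ind: m al m_eq.
move=> m IHm al m_eq al_zpm1 al_nz al_meets.
have [u [v [uD vD be_zpm1 be_meets]]] := (translate_meets_zoom al_zpm1).1 al_meets.
have be_id i : al i != 0 -> zoom_shift N u v al i = al i.
  exact: zoom_shift_id (D_range uD i) (D_range vD i) (al_zpm1 i) (be_zpm1 i).
have [i be_ne_al|be_al] := pickP (fun i => zoom_shift N u v al i != al i); last first.
  apply: E0_Eset; split=> //; split=> //; exists v, u; split=> //; split=> // i.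
  have := eqP (negbFE (be_al i)); rewrite /zoom_shift mulrBl mul1r => {2}<-.
  ring.
have al_i0 : al i = 0 by apply/eqP; apply: contraNT be_ne_al => /be_id ->.
have lt_absv : (absv al < absv (zoom_shift N u v al))%N.
  apply: (@absv_lt _ _ _ i) => [j|]; last by rewrite al_i0 absz_gt0 -al_i0.
  by have [->|/be_id ->] := eqVneq (al j) 0.
have := absv_le_dim be_zpm1; case: m IHm m_eq => [|m] IHm m_eq; first by lia.
move=> le_d; split=> //; split=> //.
exists (fun i => (u i)%:Z - (v i)%:Z); split; first by exists u, v.
change (Ecum N D m (zoom_shift N u v al)).
apply: (@Ecum_mono _ _ _ (d - absv (zoom_shift N u v al))); first by lia.
apply/Eset_Ecum/IHm => //; first by lia.
by case: al_nz => j al_j; exists j; rewrite be_id.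
Qed.

Lemma translate_meets_iff_Eset al : zpm1 al -> nonzerov al ->
  translate_meets K al <-> Eset N D (d - absv al) al.
Proof.
move=> al_zpm1 al_nz; split; first exact: translate_meets_Eset.
by move/Eset_Ecum; exact: Ecum_translate_meets.
Qed.

Lemma images_meet_iff s s' : size s = size s' ->
  in_digit_range N s -> in_digit_range N s' ->
  let a := fun i => piw N s i - piw N s' i in zpm1 a ->
  (psiw p s @` K) `&` (psiw p s' @` K) !=set0 <-> translate_meets K a.
Proof.
move=> size_eq s_range s'_range a a_zpm1.
have meet i x x' := coordw_meet N_ge2 p_gt0 p_sum1 (i:=i) (x:=x) (x':=x')
  size_eq s_range s'_range.
split=> [[_ [[y Ky <-] [y' Ky' y'_eq]]]|[y [y' [Ky Ky' y'_eq]]]].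
  exists y, y'; split=> // i.
  apply/(meet i _ _ (K_unit_cube i Ky) (K_unit_cube i Ky') (a_zpm1 i)).
  by rewrite -!psiw_coord y'_eq.
exists (psiw p s y); split; first by exists y.
exists y' => //; apply/matrixP => r i; rewrite [r]ord1 !psiw_coord.
apply/esym/(meet i _ _ (K_unit_cube i Ky) (K_unit_cube i Ky') (a_zpm1 i)).
exact: y'_eq.
Qed.

End Sponge.

Theorem mainTheorem20 (R : realType) (d : nat) (N : 'I_d -> nat)
  (p : 'I_d -> nat -> R) (D : seq (digit d)) (K : set 'rV[R]_d)
  (s s' : seq (digit d)) :
  (2 <= d)%N ->
  (forall i, 2 <= N i)%N ->
  (forall i j, (1 <= j <= N i)%N -> 0 < p i j) ->
  (forall i, \sum_(1 <= j < (N i).+1) p i j = 1) ->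
  uniq D ->
  (forall w, w \in D -> forall i, (1 <= w i <= N i)%N) ->
  (1 < size D)%N -> (size D < \prod_(i < d) N i)%N ->
  compact K -> K !=set0 ->
  K = \bigcup_(w in [set w | w \in D]) (psi1 p w @` K) ->
  s != [::] -> all (mem D) s -> all (mem D) s' -> size s = size s' ->
  let a := fun i => piw N s i - piw N s' i in
  zpm1 a -> nonzerov a ->
  ((psiw p s @` K) `&` (psiw p s' @` K) !=set0 <-> Eset N D (d - absv a) a).
Proof.
move=> _ N_ge2 p_gt0 p_sum1 _ D_range _ _ K_compact K_nonempty K_attractor _
  sD s'D size_eq a a_zpm1 a_nz.
have s_range : in_digit_range N s by move=> w /(allP sD); exact: D_range.
have s'_range : in_digit_range N s' by move=> w /(allP s'D); exact: D_range.
rewrite (images_meet_iff N_ge2 p_gt0 p_sum1 D_range K_compact K_nonempty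
  K_attractor size_eq s_range s'_range a_zpm1).
exact: (translate_meets_iff_Eset N_ge2 p_gt0 p_sum1 D_range K_compact K_nonempty
  K_attractor a_zpm1 a_nz).
Qed.
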